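(* For a connected cubic graph $G$, the following are equivalent: (a) $G$ is bipartite; (b) $1$ is an eigenvalue of the truncation $T(G)$; (c) $1$ is a simple eigenvalue of $T(G)$.
   Context: The truncation $T(G)$ of a cubic multigraph $G$ is the cubic graph in which every vertex $v$ of $G$ is replaced by a triangle whose three vertices correspond to the three edge-ends at $v$, and every edge $uv$ of $G$ gives an edge of $T(G)$ joining the corresponding vertices of the triangles of $u$ and $v$ (equivalently, $T(G)$ is the line graph of the subdivision of $G$). Eigenvalues are those of the adjacency matrix; simple means a $1$-dimensional eigenspace. *)

From mathcomp Require Import all_boot all_order all_algebra.
From mathcomp Require Import algC.
Set Implicit Arguments. Unset Strict Implicit. Unset Printing Implicit Defensive.
Import GRing.Theory Num.Theory.
Local Open Scope ring_scope.

Definition simple_graph (V : finType) (e : rel V) : Prop :=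
  symmetric e /\ irreflexive e.

Definition cubic (V : finType) (e : rel V) : Prop :=
  forall v : V, #|[set w | e v w]|%N = 3%N.

Definition connected (V : finType) (e : rel V) : Prop :=
  forall u v : V, connect e u v.

Definition bipartite (V : finType) (e : rel V) : Prop :=
  exists c : V -> bool, forall u v, e u v -> c u != c v.

(* Vertices of the truncation T(G): the edge-ends (darts) (u,v) with uv an
   edge; the dart (u,v) is the vertex of the triangle of u corresponding to
   the edge uv. *)
Definition dart (V : finType) (e : rel V) : finType := {p : V * V | e p.1 p.2}.

(* Adjacency in T(G): two distinct darts at the same vertex (triangle edges),
   or the two ends (u,v),(v,u) of one edge of G. *)
Definition trunc_adj (V : finType) (e : rel V) (x y : dart e) : bool :=
  (((val x).1 == (val y).1) && (x != y))
  || (((val x).1 == (val y).2) && ((val x).2 == (val y).1)).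

Definition trunc_adjmx (V : finType) (e : rel V) : 'M[algC]_#|dart e| :=
  \matrix_(i, j) (trunc_adj (enum_val i) (enum_val j))%:R.

Definition is_eigenvalue (n : nat) (A : 'M[algC]_n) (a : algC) : Prop :=
  eigenvalue A a.

Definition simple_eigenvalue (n : nat) (A : 'M[algC]_n) (a : algC) : Prop :=
  \rank (eigenspace A a) = 1%N.

From mathcomp Require Import all_boot all_order all_algebra.
From mathcomp Require Import algC ring.
Set Implicit Arguments. Unset Strict Implicit. Unset Printing Implicit Defensive.
Import GRing.Theory Num.Theory.
Local Open Scope ring_scope.

(* Let x be a 1-eigenvector of T(G), seen as a function on darts, and let S u be
   the sum of x over the three darts at u.  The eigen-equations at (u,w) and
   (w,u) give 3 x(u,w) = 2 S u + S w; summing over the darts at u puts S in the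
   kernel of the signless Laplacian of G, so S u + S w = 0 on every edge and
   3 x(u,w) = S u.  In a connected graph S, hence x, is then determined by S v0:
   the 1-eigenspace has dimension at most one, and a nonzero S is, up to sign,
   a proper 2-colouring.  Conversely a proper 2-colouring c yields the
   eigenvector (u,w) |-> (-1)^(c u). *)

Section TruncationOperator.
Variables (V : finType) (e : rel V).
Context {C : numClosedFieldType}.
Hypotheses (e_sym : symmetric e) (e_irr : irreflexive e) (e_cub : cubic e).

Lemma dart_rev_subproof (d : dart e) : e (val d).2 (val d).1.
Proof. by rewrite e_sym; exact: valP d. Qed.

Definition dart_rev (d : dart e) : dart e :=
  exist _ ((val d).2, (val d).1) (dart_rev_subproof d).

Lemma dart_revK : involutive dart_rev.
Proof. by move=> d; apply: val_inj; case: d => [[]]. Qed.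

Definition star_sum (X : dart e -> C) (u : V) : C :=
  \sum_(d | (val d).1 == u) X d.

Definition trunc_op (X : dart e -> C) (d : dart e) : C :=
  \sum_d' X d' * (trunc_adj d' d)%:R.

Lemma trunc_adjE (d' d : dart e) :
  trunc_adj d' d = ((val d').1 == (val d).1) && (d' != d) || (d' == dart_rev d).
Proof.
by case: d' d => [[a b] ?] [[c f] ?]; rewrite /trunc_adj -val_eqE /= xpair_eqE.
Qed.

Lemma trunc_opE (X : dart e -> C) (d : dart e) :
  trunc_op X d = star_sum X (val d).1 - X d + X (dart_rev d).
Proof.
have rev_other d' : d' == dart_rev d -> ((val d').1 == (val d).1) && (d' != d) = false.
  by move=> /eqP ->; rewrite /= eq_sym; case: eqP (valP d) => //= ->; rewrite e_irr.
have split_adj d' : (trunc_adj d' d)%:R =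
    (((val d').1 == (val d).1) && (d' != d))%:R + (d' == dart_rev d)%:R :> C.
  rewrite trunc_adjE; case: (d' =P dart_rev d) (rev_other d') => [-> /(_ isT) -> | _ _].
    by rewrite add0r.
  by rewrite orbF addr0.
rewrite /trunc_op; under eq_bigr do rewrite split_adj mulrDr !mulr_natr !mulrb.
rewrite big_split /= -!big_mkcond big_pred1_eq /star_sum [in RHS](bigD1 d) //=; ring.
Qed.

Lemma card_star (u : V) :
  #|[set d : dart e | (val d).1 == u]| = 3%N.
Proof.
rewrite -(e_cub u).
have -> : [set w | e u w] = [set (val d).2 | d in [set d : dart e | (val d).1 == u]].
  apply/setP => w; rewrite inE; apply/idP/imsetP => [euw | [d]].
    by exists (exist _ (u, w) euw); rewrite ?inE.
  by rewrite inE => /eqP <- ->; exact: valP d.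
apply/esym/card_in_imset => d d'; rewrite !inE => /eqP tail_d /eqP tail_d' head_dd'.
apply: val_inj.
by move: (val d) (val d') tail_d tail_d' head_dd' => [a b] [c f] /= -> -> ->.
Qed.

Lemma sum_star_const (u : V) (c : C) :
  \sum_(d : dart e | (val d).1 == u) c = c *+ 3.
Proof.
by rewrite -(card_star u) -sumr_const; apply: eq_bigl => d; rewrite inE.
Qed.

(* [f] lies in the kernel of the signless Laplacian [D + A] of the graph, whose
   quadratic form is the sum of [|f u + f w|^2] over the edges. *)
Lemma signless_laplacian_kernel (f : V -> C) :
  (forall u, \sum_(d : dart e | (val d).1 == u) (f (val d).1 + f (val d).2) = 0) ->
  forall d : dart e, f (val d).1 + f (val d).2 = 0.
Proof.
move=> f_ker d.
pose t (d : dart e) := f (val d).1 + f (val d).2.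
have tail_form : \sum_(d : dart e) t d * (f (val d).1)^* = 0.
  rewrite (partition_big (fun d : dart e => (val d).1) xpredT) //=.
  apply: big1 => u _; rewrite (eq_bigr (fun d => t d * (f u)^*)) => [|? /eqP-> //].
  by rewrite -mulr_suml f_ker mul0r.
have head_form : \sum_(d : dart e) t d * (f (val d).2)^* = 0.
  rewrite (reindex_inj (inv_inj dart_revK)) -[RHS]tail_form.
  by apply: eq_bigr => d' _; rewrite /t /= addrC.
have : \sum_(d : dart e) t d * (t d)^* = 0.
  rewrite (eq_bigr (fun d => t d * (f (val d).1)^* + t d * (f (val d).2)^*)).
    by rewrite big_split /= tail_form head_form addr0.
  by move=> d' _; rewrite {2}/t rmorphD mulrDr.
move/psumr_eq0P => /(_ (fun i _ => mul_conjC_ge0 (t i)) d isT) /eqP.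
by rewrite mul_conjC_eq0 => /eqP.
Qed.

Lemma trunc_op_sign (c : V -> bool) :
  (forall u w, e u w -> c u != c w) ->
  forall d, trunc_op (fun d => (-1) ^+ c (val d).1) d = (-1) ^+ c (val d).1.
Proof.
move=> c_proper d; rewrite trunc_opE /star_sum.
rewrite (eq_bigr (fun=> (-1) ^+ c (val d).1)) => [|d' /eqP-> //].
rewrite sum_star_const //=; move: (c_proper _ _ (valP d)).
by case: (c _); case: (c _) => //= _; rewrite ?mulr3n; ring.
Qed.

Section FixedVector.
Variable X : dart e -> C.
Hypothesis X_fixed : forall d, trunc_op X d = X d.

Lemma fixed_dart (d : dart e) :
  3 * X d = 2 * star_sum X (val d).1 + star_sum X (val d).2.
Proof.
have := X_fixed d; have := X_fixed (dart_rev d).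
rewrite !trunc_opE dart_revK /= => /eqP; rewrite -subr_eq0 => /eqP rev_eq.
move=> /eqP; rewrite -subr_eq0 => /eqP d_eq.
apply/eqP; rewrite eq_sym -subr_eq0; apply/eqP.
have -> : (0 : C) = 2 * 0 + 0 by rewrite mulr0 addr0.
by rewrite -{1}d_eq -rev_eq; ring.
Qed.

Lemma fixed_star_edge (d : dart e) :
  star_sum X (val d).1 + star_sum X (val d).2 = 0.
Proof.
apply: (signless_laplacian_kernel (f := star_sum X)) => u.
transitivity (\sum_(d : dart e | (val d).1 == u) (3 * X d - star_sum X u)).
  by apply: eq_bigr => d' /eqP tail_d'; rewrite fixed_dart tail_d'; ring.
by rewrite sumrB -mulr_sumr sum_star_const // mulr_natl subrr.
Qed.

Lemma fixed_dartE (d : dart e) : 3 * X d = star_sum X (val d).1.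
Proof.
rewrite fixed_dart -[RHS]addr0 -(fixed_star_edge d); ring.
Qed.

End FixedVector.
End TruncationOperator.

Lemma connected_alternating (V : finType) (e : rel V) (R : zmodType) (f : V -> R) :
  connected e -> (forall u w, e u w -> f u + f w = 0) ->
  forall v0 w, (f w == f v0) || (f w == - f v0).
Proof.
move=> e_conn f_alt v0 w.
have closed_pm : closed e [pred z | (f z == f v0) || (f z == - f v0)].
  move=> u u' /f_alt /eqP; rewrite addr_eq0 !inE => /eqP->.
  by rewrite eqr_opp eqr_oppLR orbC.
by have := closed_connect closed_pm (e_conn v0 w); rewrite !inE eqxx => <-.
Qed.

Lemma alternating_bipartite (V : finType) (e : rel V) (R : numDomainType)
    (f : V -> R) (v0 : V) :
  connected e -> (forall u w, e u w -> f u + f w = 0) -> f v0 != 0 -> bipartite e.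
Proof.
move=> e_conn f_alt f_v0; exists (fun u => f u == f v0) => u w euw.
have -> : f w = - f u by apply/eqP; rewrite -addr_eq0 addrC f_alt.
by case/orP: (connected_alternating e_conn f_alt v0 u) => /eqP->;
  rewrite ?opprK eqNr (negbTE f_v0) ?eqxx.
Qed.

Lemma sum_enum_rank (T : finType) (R : nmodType) (F : 'I_#|T| -> R) :
  \sum_i F i = \sum_t F (enum_rank t).
Proof.
by rewrite (reindex enum_rank) //; exists enum_val => ? _; rewrite ?enum_rankK ?enum_valK.
Qed.

Section TruncationMatrix.
Variables (V : finType) (e : rel V).

Definition dart_coord (x : 'rV[algC]_#|dart e|) (d : dart e) : algC :=
  x 0 (enum_rank d).

Definition star_col (u : V) : 'cV[algC]_#|dart e| :=
  \col_i ((val (enum_val i)).1 == u)%:R.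

Lemma trunc_adjmx_coord (x : 'rV[algC]_#|dart e|) (d : dart e) :
  (x *m trunc_adjmx e) 0 (enum_rank d) = trunc_op (dart_coord x) d.
Proof.
by rewrite mxE sum_enum_rank; apply: eq_bigr => d' _; rewrite mxE !enum_rankK.
Qed.

Lemma star_colE (x : 'rV[algC]_#|dart e|) (u : V) :
  (x *m star_col u) 0 0 = star_sum (dart_coord x) u.
Proof.
rewrite mxE sum_enum_rank /star_sum [RHS]big_mkcond /=.
by apply: eq_bigr => d _; rewrite mxE enum_rankK mulr_natr mulrb.
Qed.

Hypotheses (e_sym : symmetric e) (e_irr : irreflexive e).
Hypotheses (e_cub : cubic e) (e_conn : connected e).

Section Eigenvector1.
Variable x : 'rV[algC]_#|dart e|.
Hypothesis x_fixed : x *m trunc_adjmx e = x.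

Lemma trunc_eigenvector1_fixed (d : dart e) :
  trunc_op (dart_coord x) d = dart_coord x d.
Proof. by rewrite -trunc_adjmx_coord x_fixed. Qed.

Lemma trunc_eigenvector1_star_alt (u w : V) :
  e u w -> star_sum (dart_coord x) u + star_sum (dart_coord x) w = 0.
Proof.
move=> euw.
exact: (fixed_star_edge e_sym e_irr e_cub trunc_eigenvector1_fixed (exist _ (u, w) euw)).
Qed.

Lemma trunc_eigenvector1_eq0 (v0 : V) : star_sum (dart_coord x) v0 = 0 -> x = 0.
Proof.
move=> star_v0; have star_eq0 w : star_sum (dart_coord x) w = 0.
  have /orP[] := connected_alternating e_conn trunc_eigenvector1_star_alt v0 w;
    by rewrite star_v0 ?oppr0 => /eqP.
apply/rowP => i; rewrite mxE -(enum_valK i).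
have := fixed_dartE e_sym e_irr e_cub trunc_eigenvector1_fixed (enum_val i).
by rewrite star_eq0 => /eqP; rewrite mulf_eq0 pnatr_eq0 => /eqP.
Qed.

End Eigenvector1.

(* The functional [x |-> star_sum x v0] is injective on the eigenspace. *)
Lemma trunc_eigenspace1_rank_le1 (v0 : V) :
  (\rank (eigenspace (trunc_adjmx e) 1) <= 1)%N.
Proof.
rewrite -(mxrank_mul_ker _ (star_col v0)).
have /eqP-> : \rank (eigenspace (trunc_adjmx e) 1 :&: kermx (star_col v0)) == 0.
  rewrite mxrank_eq0; apply/rowV0P => x; rewrite sub_capmx.
  case/andP => /eigenspaceP; rewrite scale1r => x_fixed /sub_kermxP x_star.
  by apply: (trunc_eigenvector1_eq0 x_fixed (v0 := v0)); rewrite -star_colE x_star mxE.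
by rewrite addn0 rank_leq_col.
Qed.

Lemma bipartite_trunc_eigenvalue1 (v0 : V) :
  bipartite e -> eigenvalue (trunc_adjmx e) 1.
Proof.
case=> c c_proper; pose sign (d : dart e) : algC := (-1) ^+ c (val d).1.
pose x : 'rV[algC]_#|dart e| := \row_i sign (enum_val i).
have x_coord d : dart_coord x d = sign d by rewrite /dart_coord mxE enum_rankK.
have [w v0w] : exists w, e v0 w.
  have : (0 < #|[set w | e v0 w]|)%N by rewrite e_cub.
  by case/card_gt0P => w; rewrite inE; exists w.
apply/eigenvalueP; exists x.
  apply/rowP => i; rewrite scale1r -(enum_valK i) trunc_adjmx_coord [RHS]mxE enum_rankK.
  rewrite /sign -(trunc_op_sign e_sym e_irr e_cub c_proper); apply: eq_bigr => d _.
  by rewrite x_coord.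
apply/eqP => /rowP /(_ (enum_rank (exist _ (v0, w) v0w : dart e))).
by rewrite !mxE enum_rankK => /eqP; rewrite signr_eq0.
Qed.

Lemma trunc_eigenvalue1_bipartite (v0 : V) :
  eigenvalue (trunc_adjmx e) 1 -> bipartite e.
Proof.
case/eigenvalueP => x; rewrite scale1r => x_fixed x_neq0.
apply: (alternating_bipartite (v0 := v0) e_conn (trunc_eigenvector1_star_alt x_fixed)).
by apply: contra x_neq0 => /eqP /(trunc_eigenvector1_eq0 x_fixed)->.
Qed.

End TruncationMatrix.

Theorem corollary6p3 (V : finType) (e : rel V) (v0 : V) :
  simple_graph e -> cubic e -> connected e ->
  (bipartite e <-> is_eigenvalue (trunc_adjmx e) 1) /\
  (is_eigenvalue (trunc_adjmx e) 1 <-> simple_eigenvalue (trunc_adjmx e) 1).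
Proof.
move=> [e_sym e_irr] e_cub e_conn; rewrite /is_eigenvalue /simple_eigenvalue.
split; split.
- exact: bipartite_trunc_eigenvalue1.
- exact: trunc_eigenvalue1_bipartite.
- move=> ev1; apply/eqP; rewrite eqn_leq trunc_eigenspace1_rank_le1 //.
  by rewrite lt0n mxrank_eq0.
- by move=> rank1; rewrite /eigenvalue -mxrank_eq0 rank1.
Qed.
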